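(* In the setting below, if a PHB $\mathbf{E}$ is $\Delta^-$-stable but $\Delta^+$-unstable, then every destabilizing subbundle of $\mathbf{E}$ has discrete data $S$.
   Context: Fix distinct $x_1,\dots,x_n\in\mathbb{C}\mathbb{P}^1$. Weights $\beta=(\beta_1(x_i),\beta_2(x_i))_i$ with $0\le\beta_1(x_i)<\beta_2(x_i)<1$ form the weight space $Q$; put $\alpha=\beta_2-\beta_1$ and $\varepsilon_T(\alpha)=\sum_{i\in T}\alpha_i-\sum_{i\notin T}\alpha_i$. Walls are the intersections of $Q$ with the hyperplanes $\varepsilon_T(\beta_2-\beta_1)=0$; chambers are the components of the complement. All PHBs here are rank-2 parabolic Higgs bundles $(E,\Phi)$ over $\mathbb{C}\mathbb{P}^1$ whose underlying holomorphic bundle is trivial, with fixed determinant and trace-free Higgs field: $E$ has a line $E_{x_i,2}\subset E_{x_i}$ at each $x_i$ with weights $\beta_1(x_i)<\beta_2(x_i)$, $\Phi$ is a meromorphic $\mathrm{End}_0(E)\otimes K_{\mathbb{C}\mathbb{P}^1}$-valued section with at most simple poles at the $x_i$ whose residue maps $E_{x_i}$ into $E_{x_i,2}$ and kills $E_{x_i,2}$. A parabolic line subbundle $L$ (necessarily holomorphically trivial) gets weight $\beta_2(x_i)$ at $x_i$ if $L_{x_i}=E_{x_i,2}$ and $\beta_1(x_i)$ otherwise; its discrete data is $S_L=\{i: L_{x_i}=E_{x_i,2}\}$. $(E,\Phi)$ is stable for $\beta$ iff every $\Phi$-invariant line subbundle $L$ satisfies $\varepsilon_{S_L}(\beta_2-\beta_1)<0$.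 Fix a point of $Q$ lying on exactly one wall $W$; a small neighborhood meets two chambers $\Delta^+,\Delta^-$; let $S$ be the index set defining $W$, chosen (replacing $S$ by $S^c$ if needed) so that $\varepsilon_S(\beta_2-\beta_1)>0$ for $\beta\in\Delta^+$. $\Delta^\pm$-stable means stable for weights in $\Delta^\pm$. If $\mathbf{E}$ is $\Delta^-$-stable but $\Delta^+$-unstable, a destabilizing subbundle is a $\Phi$-invariant parabolic line subbundle for which the stability inequality holds in $\Delta^-$ and fails in $\Delta^+$. *)

From HB Require Import structures.
From mathcomp Require Import all_boot all_order all_algebra.
From mathcomp Require Import all_classical all_reals all_analysis.
From mathcomp Require Import complex.
Set Implicit Arguments. Unset Strict Implicit. Unset Printing Implicit Defensive.
Import Order.TTheory GRing.Theory Num.Theory.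
Import numFieldNormedType.Exports.
Local Open Scope classical_set_scope.
Local Open Scope ring_scope.

(* A weight vector beta: pair of rows (beta_1(x_i))_i, (beta_2(x_i))_i. *)
Definition weight (R : realType) (n : nat) := ('rV[R]_n * 'rV[R]_n)%type.

Definition alpha (R : realType) (n : nat) (b : weight R n) (i : 'I_n) : R :=
  b.2 0 i - b.1 0 i.

Definition epsT (R : realType) (n : nat) (T : {set 'I_n}) (a : 'I_n -> R) : R :=
  \sum_(i in T) a i - \sum_(i in ~: T) a i.

Definition Qspace (R : realType) (n : nat) : set (weight R n) :=
  [set b : weight R n | forall i, 0 <= b.1 0 i /\ b.1 0 i < b.2 0 i /\ b.2 0 i < 1].

Arguments Qspace R n _ : clear implicits.

Definition wall_of (R : realType) (n : nat) (T : {set 'I_n}) : set (weight R n) :=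
  Qspace R n `&` [set b : weight R n | epsT T (alpha b) = 0].

Arguments wall_of R {n} T _.

Definition is_wall (R : realType) (n : nat) (W : set (weight R n)) : Prop :=
  W !=set0 /\ exists T : {set 'I_n}, W = wall_of R T.

Definition walls_union (R : realType) (n : nat) : set (weight R n) :=
  \bigcup_(T in [set: {set 'I_n}]) wall_of R T.

Arguments walls_union R n _ : clear implicits.

Definition chamber_domain (R : realType) (n : nat) : set (weight R n) :=
  Qspace R n `\` walls_union R n.

Arguments chamber_domain R n _ : clear implicits.

Definition is_chamber (R : realType) (n : nat) (D : set (weight R n)) : Prop :=
  exists2 b, chamber_domain R n b & D = connected_component (chamber_domain R n) b.

(* Underlying bundle: trivial C^2 over CP^1, vectors are row vectors
   'rV[C]_2, endomorphisms act on the right (v |-> v *m A).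
   Marked points x_i in CP^1 = C u {oo}: [Some a] is a in C, [None] is oo.
   flag i spans E_{x_i,2}; res i is the residue of Phi at x_i. *)
Record PHB (R : realType) (n : nat) := {
  pts : 'I_n -> option R[i];
  flag : 'I_n -> 'rV[R[i]]_2;
  res : 'I_n -> 'M[R[i]]_2 }.

(* The Higgs field in the affine coordinate z (coefficient of dz):
   Phi(z) = sum over finite marked points x_i of res_i / (z - x_i). *)
Definition Phi_at (R : realType) (n : nat) (E : PHB R n) (z : R[i]) : 'M[R[i]]_2 :=
  \sum_i (match pts E i with Some a => (z - a)^-1 *: res E i | None => 0 end).

(* Well-formedness of the PHB data:
   - the marked points are distinct,
   - each E_{x_i,2} is a line,
   - residue maps E_{x_i} into E_{x_i,2} and kills E_{x_i,2},
   - Phi = sum_i res_i dz/(z - x_i) has no further pole (in particular at oo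
     when oo is not marked, and residue res_i at oo when oo = x_i): this is
     exactly sum_i res_i = 0.  Trace-freeness follows from nilpotency. *)
Definition PHB_wf (R : realType) (n : nat) (E : PHB R n) : Prop :=
  injective (pts E) /\
  (forall i, \rank (flag E i) = 1%N) /\
  (forall i, (res E i <= flag E i)%MS) /\
  (forall i, flag E i *m res E i = 0) /\
  (forall i, \tr (res E i) = 0) /\
  \sum_i res E i = 0.

(* A (holomorphically trivial) line subbundle: a line L in C^2. *)
Definition is_line (R : realType) (L : 'rV[R[i]]_2) : Prop := \rank L = 1%N.

Definition Phi_invariant (R : realType) (n : nat) (E : PHB R n) (L : 'rV[R[i]]_2)
  : Prop :=
  forall z : R[i], (forall i, pts E i <> Some z) -> (L *m Phi_at E z <= L)%MS.

Definition SL (R : realType) (n : nat) (E : PHB R n) (L : 'rV[R[i]]_2)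
  : {set 'I_n} := [set i | (L == flag E i)%MS].

Definition stable (R : realType) (n : nat) (b : weight R n) (E : PHB R n) : Prop :=
  forall L, is_line L -> Phi_invariant E L -> epsT (SL E L) (alpha b) < 0.

Definition chamber_stable (R : realType) (n : nat) (D : set (weight R n))
  (E : PHB R n) : Prop := forall b, D b -> stable b E.

Definition destabilizing (R : realType) (n : nat) (Dm Dp : set (weight R n))
  (E : PHB R n) (L : 'rV[R[i]]_2) : Prop :=
  is_line L /\ Phi_invariant E L /\
  (forall b, Dm b -> epsT (SL E L) (alpha b) < 0) /\
  (forall b, Dp b -> ~ (epsT (SL E L) (alpha b) < 0)).

From HB Require Import structures.
From mathcomp Require Import all_boot all_order all_algebra.
From mathcomp Require Import all_classical all_reals all_analysis.
From mathcomp Require Import complex.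
From mathcomp Require Import lra.
Set Implicit Arguments. Unset Strict Implicit. Unset Printing Implicit Defensive.
Import Order.TTheory GRing.Theory Num.Theory.
Import numFieldNormedType.Exports.
Local Open Scope classical_set_scope.
Local Open Scope ring_scope.

(* Let T := S_L. The stability inequality eps_T < 0 holds on Delta^- and fails
   on Delta^+; by continuity eps_T(alpha p) <= 0 and >= 0 at the point p lying
   in both closures, so p is on the wall of T.  As p lies on no other wall,
   the walls of T and S coincide.  Moving beta_2 at two coordinates, one where
   T and S disagree and one where they agree, stays on the wall of S and
   leaves that of T unless T = S or T = ~: S.  Finally T = ~: S is impossible,
   since then eps_T = - eps_S < 0 on Delta^+. *)

Lemma exists_neq_mem (T : finType) (A B : {set T}) :
  A != B -> exists k, (k \in A) != (k \in B).
Proof.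
move=> neqAB; apply/existsP; rewrite -negb_forall.
by apply: contra neqAB => /forallP eqAB; apply/eqP/setP => i; apply/eqP.
Qed.

Lemma closure_le0 (T : topologicalType) (R : realFieldType) (f : T -> R)
    (D : set T) (x : T) :
  continuous f -> (forall b, D b -> f b <= 0) -> closure D x -> f x <= 0.
Proof.
move=> fcont Df /(closureS Df).
by have /closure_id <- := (continuous_closedP f).1 fcont _ (@closed_le R 0).
Qed.

Lemma is_chamber_neq0 (R : realType) (n : nat) (D : set (weight R n)) :
  is_chamber D -> D !=set0.
Proof. by case=> b Cb ->; exists b; exact: connected_component_refl. Qed.

Section EpsT.
Variables (R : realType) (n : nat).
Implicit Types (X : {set 'I_n}) (a d : 'I_n -> R).

Definition sgn_in X i : R := if i \in X then 1 else -1.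

Lemma normr_sgn_in X i : `|sgn_in X i| = 1.
Proof. by rewrite /sgn_in; case: (i \in X); rewrite ?normrN normr1. Qed.

Lemma sgn_in_sqr X i : sgn_in X i * sgn_in X i = 1.
Proof. by rewrite /sgn_in; case: (i \in X); rewrite ?mulrNN mulr1. Qed.

Lemma epsTE X a : epsT X a = \sum_i sgn_in X i * a i.
Proof.
rewrite /epsT [RHS](bigID (mem X)) /= -sumrN; congr (_ + _).
  by apply: eq_big => i; rewrite ?inE // /sgn_in => ->; rewrite mul1r.
apply: eq_big => i; first by rewrite inE.
by rewrite inE /sgn_in => /negbTE ->; rewrite mulN1r.
Qed.

Lemma epsTC X a : epsT (~: X) a = - epsT X a.
Proof. by rewrite /epsT finset.setCK opprB. Qed.

Lemma epsTD X a d : epsT X (a \+ d) = epsT X a + epsT X d.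
Proof. by rewrite !epsTE -big_split; apply: eq_bigr => i _; rewrite mulrDr. Qed.

Lemma epsT_supp2 X d k m : k != m ->
    (forall j, j != k -> j != m -> d j = 0) ->
  epsT X d = sgn_in X k * d k + sgn_in X m * d m.
Proof.
move=> km d0; rewrite epsTE (bigD1 k) //= (bigD1 m) 1?eq_sym //= addrA.
by rewrite big1 ?addr0 // => j /andP[jk jm]; rewrite d0 ?mulr0.
Qed.

Lemma continuous_epsT (T : topologicalType) X (f : T -> 'I_n -> R) :
  (forall i, continuous (f^~ i)) -> continuous (fun t => epsT X (f t)).
Proof.
move=> fcont; under eq_fun do rewrite epsTE.
apply: continuous_big => [|i _ t]; first exact: add_continuous.
by apply: continuousM; [exact: cst_continuous | exact: fcont].
Qed.

Lemma continuous_epsT_alpha X : continuous (fun b : weight R n => epsT X (alpha b)).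
Proof.
apply: continuous_epsT => i b; apply: continuousB.
- apply: (@continuous_comp _ _ _ snd (fun M : 'rV[R]_n => M 0 i)).
    exact: cvg_snd.
  exact: coord_continuous.
- apply: (@continuous_comp _ _ _ fst (fun M : 'rV[R]_n => M 0 i)).
    exact: cvg_fst.
  exact: coord_continuous.
Qed.

End EpsT.

Section Walls.
Variables (R : realType) (n : nat).
Implicit Types (p : weight R n) (d : 'I_n -> R).

Definition shift_beta2 p d : weight R n := (p.1, \row_j (p.2 0 j + d j)).

Lemma alpha_shift_beta2 p d : alpha (shift_beta2 p d) = alpha p \+ d.
Proof. by apply: funext => j; rewrite /alpha /= mxE addrAC. Qed.

Lemma Qspace_shift_beta2 p d : Qspace R n p ->
    (forall j, `|d j| < Num.min (alpha p j) (1 - p.2 0 j)) ->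
  Qspace R n (shift_beta2 p d).
Proof.
move=> Qp dsmall j; have [b1_ge0 [b1_lt_b2 b2_lt1]] := Qp j.
move: (dsmall j); rewrite lt_min !ltr_norml /alpha /= mxE.
by move=> /andP[/andP[? ?] /andP[? ?]]; do !split; lra.
Qed.

(* The witness [q] moves beta_2 by [del * u] at [k] and by [- del * v] at [m]. *)
Lemma exists_shift_beta2 p k m (u v : R) :
    Qspace R n p -> k != m -> `|u| <= 1 -> `|v| <= 1 ->
  exists2 del, 0 < del & exists2 q, Qspace R n q & forall X,
    epsT X (alpha q) =
      epsT X (alpha p) + del * (sgn_in R X k * u - sgn_in R X m * v).
Proof.
move=> Qp km u1 v1.
pose g j := Num.min (alpha p j) (1 - p.2 0 j).
have g_gt0 j : 0 < g j.
  by have [? [? ?]] := Qp j; rewrite lt_min /alpha; apply/andP; split; lra.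
pose del := Num.min (g k) (g m) / 2.
have del_gt0 : 0 < del by rewrite divr_gt0 // lt_min !g_gt0.
have [del_lt_k del_lt_m] : del < g k /\ del < g m.
  have := ge_min (g k) (g k) (g m); have := ge_min (g m) (g k) (g m).
  rewrite !lexx orbT /= => minm mink.
  by have := del_gt0; rewrite /del; split; lra.
pose d j := if j == k then del * u else if j == m then - (del * v) else 0.
have d0 j : j != k -> j != m -> d j = 0 by rewrite /d => /negbTE -> /negbTE ->.
exists del => //; exists (shift_beta2 p d) => [|X].
  apply: Qspace_shift_beta2 => // j; rewrite -/(g j) /d.
  have del_le w : `|w| <= 1 -> `|del * w| <= del.
    by move=> w1; rewrite normrM gtr0_norm //; exact: ler_piMr (ltW del_gt0) w1.
  case: eqVneq => [->|_]; first exact: le_lt_trans (del_le _ u1) _.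
  case: eqVneq => [->|_]; first by rewrite normrN; exact: le_lt_trans (del_le _ v1) _.
  by rewrite normr0.
rewrite alpha_shift_beta2 epsTD (epsT_supp2 _ km d0) /d eqxx eq_sym (negbTE km) eqxx.
by congr (_ + _); rewrite mulrN mulrCA [_ * (del * v)]mulrCA -mulrBr.
Qed.

Lemma wall_of_eq (S T : {set 'I_n}) p :
  wall_of R S p -> wall_of R T = wall_of R S -> T = S \/ T = ~: S.
Proof.
move=> [Qp eS] eqTS.
have [|] := eqVneq T S; [by left | move=> /exists_neq_mem[k Tk]].
have [|] := eqVneq T (~: S); [by right | move=> /exists_neq_mem[m]].
rewrite inE => Tm; exfalso.
have km : k != m.
  by apply: contraNneq Tk => ->; move: Tm; case: (m \in T); case: (m \in S).
have sgnTk : sgn_in R T k = - sgn_in R S k.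
  by move: Tk; rewrite /sgn_in; case: (k \in T); case: (k \in S); rewrite ?opprK.
have sgnTm : sgn_in R T m = sgn_in R S m.
  by move: Tm; rewrite /sgn_in; case: (m \in T); case: (m \in S).
have sgn_le1 i : `|sgn_in R S i| <= 1 by rewrite normr_sgn_in.
have [del del_gt0 [q Qq epsq]] := exists_shift_beta2 Qp km (sgn_le1 k) (sgn_le1 m).
have [_ eTp] : wall_of R T p by rewrite eqTS.
have [_] : wall_of R T q.
  by rewrite eqTS; split => //=; rewrite epsq eS !sgn_in_sqr subrr mulr0 addr0.
apply/eqP; rewrite epsq eTp add0r sgnTk sgnTm mulNr !sgn_in_sqr.
by apply: mulf_neq0; [rewrite gt_eqF | apply: ltr0_neq0; lra].
Qed.

End Walls.

Lemma epsT_eq0_closure (R : realType) (n : nat) (T : {set 'I_n})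
    (Dm Dp : set (weight R n)) (p : weight R n) :
  (forall b, Dm b -> epsT T (alpha b) < 0) ->
  (forall b, Dp b -> ~ epsT T (alpha b) < 0) ->
  closure Dm p -> closure Dp p -> epsT T (alpha p) = 0.
Proof.
move=> negDm nnegDp clm clp; apply/eqP; rewrite eq_le; apply/andP; split.
  by apply: (closure_le0 (@continuous_epsT_alpha _ _ T)) clm => b /negDm/ltW.
rewrite -oppr_le0 -epsTC.
apply: (closure_le0 (@continuous_epsT_alpha _ _ _)) clp => b /nnegDp.
by rewrite epsTC oppr_le0 leNgt => /negP.
Qed.

Theorem mainTheorem5 (R : realType) (n : nat) (p : weight R n)
  (W : set (weight R n)) (S : {set 'I_n})
  (Dp Dm : set (weight R n)) (E : PHB R n) :
  Qspace R n p ->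
  is_wall W -> W p ->
  (forall W', is_wall W' -> W' p -> W' = W) ->
  W = wall_of R S ->
  is_chamber Dp -> is_chamber Dm -> Dp <> Dm ->
  closure Dp p -> closure Dm p ->
  (exists2 U, nbhs p U &
     forall D, is_chamber D -> D `&` U !=set0 -> D = Dp \/ D = Dm) ->
  (forall b, Dp b -> 0 < epsT S (alpha b)) ->
  PHB_wf E ->
  chamber_stable Dm E -> ~ chamber_stable Dp E ->
  forall L, destabilizing Dm Dp E L -> SL E L = S.
Proof.
move=> Qp _ Wp W_uniq WS chDp _ _ clDp clDm _ epsS_Dp _ _ _ L [_ [_ [negDm nnegDp]]].
set T := SL E L.
have wall_T : wall_of R T p by split; last exact: epsT_eq0_closure negDm nnegDp clDm clDp.
have is_wall_T : is_wall (wall_of R T) by split; [exists p | exists T].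
have WT : wall_of R T = W := W_uniq _ is_wall_T wall_T.
rewrite WS in Wp WT.
have [//|TSc] := wall_of_eq Wp WT.
have [b Dp_b] := is_chamber_neq0 chDp.
by case: (nnegDp b Dp_b); rewrite -/T TSc epsTC oppr_lt0 epsS_Dp.
Qed.
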